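(* Let $n\ge1$, $\nu\ge1$ be integers and $\delta\in\{0,1,2\}$. Then: (1) If $[\vec a]$ is a vertex of $\mathcal{O}^{(2\nu+\delta)}_{2^n}$, then $|\{[\vec b]\in\mathcal{V}(\mathcal{O}^{(2\nu+\delta)}_{2^n}):[\pi(\vec a)]=[\pi(\vec b)]\}|=2^{(n-1)(2\nu+\delta-2)}$. (2) $[\vec a]$ and $[\vec b]$ are adjacent vertices in $\mathcal{O}^{(2\nu+\delta)}_{2^n}$ if and only if $[\pi(\vec a)]$ and $[\pi(\vec b)]$ are adjacent vertices in $\mathcal{O}^{(2\nu+\delta)}_{2}$. (3) If $[\pi(\vec a)]$ and $[\pi(\vec b)]$ are adjacent vertices in $\mathcal{O}^{(2\nu+\delta)}_{2}$, then $[\vec a+\vec m_1]$ and $[\vec b+\vec m_2]$ are adjacent vertices in $\mathcal{O}^{(2\nu+\delta)}_{2^n}$ for all $\vec m_1,\vec m_2\in(2\mathbb{Z}_{2^n})^{2\nu+\delta}$ such that $(\vec a+\vec m_1)G_{2\nu+\delta,\Delta}(\vec a+\vec m_1)^t=(\vec b+\vec m_2)G_{2\nu+\delta,\Delta}(\vec b+\vec m_2)^t=0$.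
   Context: Let $V^{2\nu+\delta}$ be the set of tuples $\vec a=(a_1,\ldots,a_{2\nu+\delta})\in(\mathbb{Z}_{2^n})^{2\nu+\delta}$ such that some $a_i$ is a unit of $\mathbb{Z}_{2^n}$. Write $\vec a\sim\vec b$ if $\vec a=\lambda\vec b$ for some $\lambda\in\mathbb{Z}_{2^n}^\times$, let $[\vec a]$ denote the equivalence class and $V^{2\nu+\delta}_\sim$ the set of classes. Let $G_{2\nu+\delta,\Delta}=\begin{pmatrix}0&I_\nu&\\ &0&\\ &&\Delta\end{pmatrix}$ over $\mathbb{Z}_{2^n}$ (first two block sizes $\nu$, unspecified blocks zero), where $\Delta$ is empty if $\delta=0$, $\Delta=(1)$ if $\delta=1$, and $\Delta=\begin{pmatrix}z&1\\0&z\end{pmatrix}$ if $\delta=2$, with $z$ a fixed unit of $\mathbb{Z}_{2^n}$. The orthogonal graph $\mathcal{O}^{(2\nu+\delta)}_{2^n}$ has vertex set $\mathcal{V}(\mathcal{O}^{(2\nu+\delta)}_{2^n})=\{[\vec a]\in V^{2\nu+\delta}_\sim:\vec a\,G_{2\nu+\delta,\Delta}\,\vec a^t=0\}$, with $[\vec a]$ adjacent to $[\vec b]$ iff $\vec a(G_{2\nu+\delta,\Delta}+G_{2\nu+\delta,\Delta}^t)\vec b^t\in\mathbb{Z}_{2^n}^\times$. $\mathcal{O}^{(2\nu+\delta)}_{2}$ denotes the same construction with $n=1$ (using the reduction of $G_{2\nu+\delta,\Delta}$ mod $2$). $\pi:\mathbb{Z}_{2^n}\to\mathbb{Z}_2$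 is reduction mod $2$, applied componentwise to tuples. *)

From HB Require Import structures.
From mathcomp Require Import all_boot all_order all_algebra.
Set Implicit Arguments. Unset Strict Implicit. Unset Printing Implicit Defensive.
Import GRing.Theory.
Local Open Scope ring_scope.

(* The matrix G_{2nu+delta,Delta} over a commutative ring R, with parameter z:
   (0 I_nu ; 0 0) in the top-left 2nu x 2nu block, and Delta in the bottom
   right delta x delta block: Delta = () if delta = 0, (1) if delta = 1,
   ((z,1),(0,z)) if delta = 2. *)
Definition Gmat (R : comNzRingType) (nu delta : nat) (z : R) : 'M[R]_(2 * nu + delta) :=
  \matrix_(i, j)
    if ((i < nu)%N && (j == (i + nu)%N :> nat)) then 1
    else if (delta == 1%N) && (i == (2 * nu)%N :> nat) && (j == (2 * nu)%N :> nat) then 1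
    else if (delta == 2%N) then
      (if (i == (2 * nu)%N :> nat) && (j == (2 * nu)%N :> nat) then z
       else if (i == (2 * nu).+1%N :> nat) && (j == (2 * nu).+1%N :> nat) then z
       else if (i == (2 * nu)%N :> nat) && (j == (2 * nu).+1%N :> nat) then 1
       else 0)
    else 0.

Section Graph.
Variables (R : finComUnitRingType) (N : nat) (G : 'M[R]_N).

Definition primitive (a : 'rV[R]_N) : bool := [exists i, a 0 i \is a GRing.unit].

Definition cls (a : 'rV[R]_N) : {set 'rV[R]_N} :=
  [set b | [exists l : R, (l \is a GRing.unit) && (b == l *: a)]].

Definition qform (a : 'rV[R]_N) : R := (a *m G *m a^T) 0 0.
Definition bform (a b : 'rV[R]_N) : R := (a *m (G + G^T) *m b^T) 0 0.

Definition is_vertex (a : 'rV[R]_N) : bool := primitive a && (qform a == 0).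

Definition adj_vertices (a b : 'rV[R]_N) : bool :=
  [&& is_vertex a, is_vertex b & bform a b \is a GRing.unit].

Definition vertices : {set {set 'rV[R]_N}} := [set cls a | a in [pred a | is_vertex a]].

End Graph.

Definition pi2 (n : nat) (x : 'Z_(2 ^ n)) : 'Z_2 := (nat_of_ord x)%:R.
Definition piv (n N : nat) (a : 'rV['Z_(2 ^ n)]_N) : 'rV['Z_2]_N := map_mx (@pi2 n) a.

From HB Require Import structures.
From mathcomp Require Import all_boot all_order all_algebra.
From mathcomp Require Import zify ring.
Set Implicit Arguments. Unset Strict Implicit. Unset Printing Implicit Defensive.
Import GRing.Theory.
Local Open Scope ring_scope.

(* Reduction mod 2 is a ring morphism Z_{2^n} -> Z_2 and x is a unit of
   Z_{2^n} exactly when pi x = 1.  Hence primitivity of a vector and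
   adjacency (a unit value of the bilinear form) can be read off mod 2, which
   gives (2) and (3).
   For (1), the block Delta has no nonzero isotropic vector over Z_2, so a
   vertex a has, mod 2, a coordinate 1 at some hyperbolic index k < 2 nu.  If
   k' is the hyperbolic partner of k, then Q(b) = Q(b - b_k' e_k') + b_k' b_k,
   so an isotropic b with b_k a unit is determined by its coordinates off k'.
   The isotropic primitive vectors lying over pi(a) thus correspond to the
   (2^(n-1))^(N-1) choices of these coordinates in their residue classes
   (N = 2 nu + delta); dividing by the 2^(n-1) units, which act freely,
   counts the vertices. *)

Lemma exp2S_gt1 n : (1 < 2 ^ n.+1)%N.
Proof. by rewrite -[1%N](expn0 2) ltn_exp2l. Qed.

Lemma Zp_trunc_exp2S n : (Zp_trunc (2 ^ n.+1)).+2 = (2 ^ n.+1)%N.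
Proof. by rewrite Zp_cast ?exp2S_gt1. Qed.

Lemma dvd2_Zp_exp2 n : (2 %| (Zp_trunc (2 ^ n)).+2)%N.
Proof. by case: n => [|n] //; rewrite Zp_trunc_exp2S expnS dvdn_mulr. Qed.

Lemma pi2_natr n k : pi2 (k%:R : 'Z_(2 ^ n)) = k%:R.
Proof.
rewrite /pi2; have -> : nat_of_ord (k%:R : 'Z_(2 ^ n)) = (k %% (Zp_trunc (2 ^ n)).+2)%N.
  by rewrite Zp_nat.
by apply: val_inj; rewrite /= !val_Zp_nat // modn_dvdm // dvd2_Zp_exp2.
Qed.

Section Pi2Morphism.
Variable n : nat.

Lemma pi2D : {morph @pi2 n : x y / x + y}.
Proof. by move=> x y; rewrite -[x]natr_Zp -[y]natr_Zp -natrD !pi2_natr natrD. Qed.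

Lemma pi2M : {morph @pi2 n : x y / x * y}.
Proof. by move=> x y; rewrite -[x]natr_Zp -[y]natr_Zp -natrM !pi2_natr natrM. Qed.

Lemma pi2_is_zmod_morphism : zmod_morphism (@pi2 n).
Proof. by move=> x y; apply: (addIr (pi2 y)); rewrite -pi2D !subrK. Qed.

HB.instance Definition _ := GRing.isZmodMorphism.Build _ _ (@pi2 n) pi2_is_zmod_morphism.
HB.instance Definition _ :=
  GRing.isMonoidMorphism.Build _ _ (@pi2 n) (pi2_natr n 1, pi2M).

End Pi2Morphism.

Lemma unitZ2E (y : 'Z_2) : (y \is a GRing.unit) = (y == 1).
Proof. by case: y => [[|[|]]]. Qed.

Lemma Z2_cases (y : 'Z_2) : y = 0 \/ y = 1.
Proof. by case: y => [[|[|//]]] ?; [left|right]; apply: val_inj. Qed.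

Lemma unitZ2nE n (x : 'Z_(2 ^ n)) : (0 < n)%N -> (x \is a GRing.unit) = (pi2 x == 1).
Proof.
case: n x => // n x _; rewrite -[x in LHS]natr_Zp unitZpE ?exp2S_gt1 //.
rewrite coprime_pexpl // coprime2n /pi2 -(inj_eq val_inj) /= val_Zp_nat // modn2.
by case: (odd x).
Qed.

Section Forms.
Variables (R : finComUnitRingType) (N : nat) (G : 'M[R]_N).
Implicit Types (u v : 'rV[R]_N) (t : R).

Lemma form_trmx u v : (u *m G^T *m v^T) 0 0 = (v *m G *m u^T) 0 0.
Proof. by rewrite -[in RHS](trmxK (v *m G *m u^T)) [in RHS]mxE !trmx_mul trmxK mulmxA. Qed.

Lemma qformD u v : qform G (u + v) = qform G u + qform G v + bform G u v.
Proof.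
have addE (A B : 'M[R]_1) : (A + B) 0 0 = A 0 0 + B 0 0 by rewrite mxE.
rewrite /qform /bform linearD /= !mulmxDl !mulmxDr !mulmxDl !addE form_trmx.
by ring.
Qed.

Lemma qformZ t u : qform G (t *: u) = t * t * qform G u.
Proof. by rewrite /qform linearZ /= -!scalemxAl -!scalemxAr !mxE mulrA. Qed.

Lemma bformZr t u v : bform G u (t *: v) = t * bform G u v.
Proof. by rewrite /bform linearZ /= -!scalemxAr mxE. Qed.

Lemma is_vertexZ t u : t \is a GRing.unit -> is_vertex G u -> is_vertex G (t *: u).
Proof.
move=> ut /andP[/existsP[i ui] /eqP qu]; rewrite /is_vertex qformZ qu mulr0 eqxx andbT.
by apply/existsP; exists i; rewrite mxE unitrM ut.
Qed.

End Forms.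

Lemma qform_map (R S : finComUnitRingType) (f : {rmorphism R -> S}) N (G : 'M[R]_N) u :
  f (qform G u) = qform (map_mx f G) (map_mx f u).
Proof. by rewrite /qform map_trmx -!map_mxM [RHS]mxE. Qed.

Lemma bform_map (R S : finComUnitRingType) (f : {rmorphism R -> S}) N (G : 'M[R]_N) u v :
  f (bform G u v) = bform (map_mx f G) (map_mx f u) (map_mx f v).
Proof. by rewrite /bform !map_trmx -map_mxD -!map_mxM [RHS]mxE. Qed.

Section Classes.
Variables (R : finComUnitRingType) (N : nat).
Implicit Types (b x : 'rV[R]_N) (l : R).

Lemma clsP x b : reflect (exists2 l, l \is a GRing.unit & x = l *: b) (x \in cls b).
Proof.
rewrite inE; apply: (iffP existsP) => [[l /andP[ul /eqP ->]]|[l ul ->]]; first by exists l.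
by exists l; rewrite ul eqxx.
Qed.

Lemma cls_refl b : b \in cls b.
Proof. by apply/clsP; exists 1; rewrite ?unitr1 ?scale1r. Qed.

Lemma cls_eq x b : x \in cls b -> cls x = cls b.
Proof.
case/clsP => l ul ->; apply/setP => y; apply/clsP/clsP => [[m um ->]|[m um ->]].
  by exists (m * l); rewrite ?unitrM ?um ?ul // scalerA.
by exists (m / l); rewrite ?unitrM ?unitrV ?um ?ul // scalerA mulrVK.
Qed.

Lemma card_cls b : primitive b -> #|cls b| = #|[set l : R | l \is a GRing.unit]|.
Proof.
case/existsP => i ui.
have -> : cls b = [set l *: b | l in [set l : R | l \is a GRing.unit]].
  apply/setP => x; apply/clsP/imsetP => [[l ul ->]|[l]]; first by exists l; rewrite ?inE.
  by rewrite inE => ul ->; exists l.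
by apply: card_in_imset => l m _ _ /rowP /(_ i); rewrite !mxE; apply: mulIr.
Qed.

Lemma card_cls_partition (S : {set 'rV[R]_N}) :
  {in S, forall b, primitive b} -> {in S, forall b l, l \is a GRing.unit -> l *: b \in S} ->
  (#|[set cls b | b in S]| * #|[set l : R | l \is a GRing.unit]|)%N = #|S|.
Proof.
move=> S_prim S_scale.
have clsS b : b \in S -> [set x in S | x \in cls b] = cls b.
  by move=> Sb; apply/setP => x; rewrite inE andb_idl // => /clsP[l ul ->]; apply: S_scale.
have -> : [set cls b | b in S] = equivalence_partition (fun b x => x \in cls b) S.
  by apply: eq_in_imset => b /clsS.
apply/esym/card_uniform_partition; last first.
  by apply: equivalence_partitionP => x y b _ _ _; split => [|/cls_eq <-]; rewrite ?cls_refl.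
by move=> _ /imsetP[b Sb ->]; rewrite clsS // card_cls ?S_prim.
Qed.

End Classes.

Lemma cls_Z2 N (u : 'rV['Z_2]_N) : cls u = [set u].
Proof.
apply/setP => x; rewrite !inE; apply/existsP/eqP => [[l /andP[]]|->].
  by rewrite unitZ2E => /eqP-> /eqP->; rewrite scale1r.
by exists 1; rewrite unitr1 scale1r eqxx.
Qed.

Section ReductionMod2.
Variables (n N : nat) (G : 'M['Z_(2 ^ n)]_N).
Hypothesis n_gt0 : (0 < n)%N.
Local Notation G2 := (map_mx (@pi2 n) G).
Implicit Types (a b c : 'rV['Z_(2 ^ n)]_N) (l : 'Z_(2 ^ n)).

Definition vertex_fibre a := [set b | is_vertex G b && (piv b == piv a)].

Lemma piv_eqP b a : reflect (forall j, pi2 (b 0 j) = pi2 (a 0 j)) (piv b == piv a).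
Proof.
apply: (iffP eqP) => [pba j|pba]; last by apply/rowP => j; rewrite !mxE.
by have /rowP/(_ j) := pba; rewrite !mxE.
Qed.

Lemma primitive_piv a : primitive (piv a) = primitive a.
Proof. by apply: eq_existsb => i; rewrite mxE unitZ2E unitZ2nE. Qed.

Lemma pivZ l a : l \is a GRing.unit -> piv (l *: a) = piv a.
Proof. by rewrite unitZ2nE // /piv map_mxZ /= => /eqP ->; rewrite scale1r. Qed.

Lemma piv_add2Z a c : piv (a + 2%:R *: c) = piv a.
Proof.
have two0 : 2%:R = 0 :> 'Z_2 by apply: val_inj.
by rewrite /piv map_mxD map_mxZ /= rmorph_nat two0 scale0r addr0.
Qed.

Lemma is_vertex_piv a : is_vertex G a -> is_vertex G2 (piv a).
Proof.
by case/andP=> prim_a /eqP qa; rewrite /is_vertex primitive_piv prim_a -qform_map qa rmorph0.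
Qed.

Lemma adj_vertices_piv a b : is_vertex G a -> is_vertex G b ->
  adj_vertices G a b = adj_vertices G2 (piv a) (piv b).
Proof.
by move=> va vb; rewrite /adj_vertices va vb !is_vertex_piv // unitZ2nE // unitZ2E bform_map.
Qed.

Lemma adj_vertices_add2Z a b c1 c2 : adj_vertices G2 (piv a) (piv b) ->
  qform G (a + 2%:R *: c1) = 0 -> qform G (b + 2%:R *: c2) = 0 ->
  adj_vertices G (a + 2%:R *: c1) (b + 2%:R *: c2).
Proof.
have vertex_add2Z x c : primitive (piv x) -> qform G (x + 2%:R *: c) = 0 ->
    is_vertex G (x + 2%:R *: c).
  by move=> px qx; rewrite /is_vertex -primitive_piv piv_add2Z px qx eqxx.
move=> adj2 qa qb; have /and3P[/andP[pa _] /andP[pb _] _] := adj2.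
by rewrite adj_vertices_piv ?vertex_add2Z // !piv_add2Z.
Qed.

Lemma vertex_classes_piv a :
  [set C in vertices G | [exists b, (C == cls b) && (cls (piv b) == cls (piv a))]]
  = [set cls b | b in vertex_fibre a].
Proof.
apply/setP => C; rewrite inE; apply/andP/imsetP => [[]|[b /[!inE] /andP[vb /eqP pba] ->]].
  case/imsetP => b0 /[!inE] vb0 -> /existsP[b /andP[/eqP b0b]]; rewrite !cls_Z2 => /eqP/set1_inj pba.
  exists b => //; rewrite inE pba eqxx andbT.
  have /clsP[l ul ->] : b \in cls b0 by rewrite b0b cls_refl.
  exact: (is_vertexZ ul vb0).
split; first by apply/imsetP; exists b.
by apply/existsP; exists b; rewrite pba !eqxx.
Qed.

End ReductionMod2.

Section GmatHyperbolic.
Variables (R : comNzRingType) (nu delta : nat) (z : R).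
Local Notation N := (2 * nu + delta)%N.
Local Notation G := (Gmat nu delta z).

Fact partner_subproof (j : 'I_N) : ((if j < nu then j + nu else j - nu) < N)%N.
Proof. by have := ltn_ord j; case: ifP; lia. Qed.

Definition partner (j : 'I_N) : 'I_N := Ordinal (partner_subproof j).

Variable j : 'I_N.
Hypothesis j_lt : (j < 2 * nu)%N.

Lemma partner_lt : (partner j < 2 * nu)%N.
Proof. by rewrite /=; case: ifP; lia. Qed.

Lemma partnerK : partner (partner j) = j.
Proof.
apply: val_inj; rewrite /=.
by case: (ltnP j nu) => h; rewrite ?h ?(ltnNge j) ?h /=; case: ifP; lia.
Qed.

Lemma partner_neq : partner j != j.
Proof. by rewrite -(inj_eq val_inj) /=; case: ifP => ?; apply/eqP; lia. Qed.

Let j_notin_Delta : (j == 2 * nu :> nat) = false /\ (j == (2 * nu).+1 :> nat) = false.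
Proof. by split; apply/eqP; lia. Qed.

Lemma Gmat_col (i : 'I_N) : G i j = ((i < nu)%N && (j == (i + nu)%N :> nat))%:R.
Proof. by case: j_notin_Delta => j2 j2S; rewrite mxE j2 j2S !andbF /= !if_same; case: ifP. Qed.

Lemma Gmat_row (i : 'I_N) : G j i = ((j < nu)%N && (i == (j + nu)%N :> nat))%:R.
Proof.
by case: j_notin_Delta => j2 j2S; rewrite mxE j2 j2S !andbF !andFb /= !if_same; case: ifP.
Qed.

Lemma Gmat_sym_partner (i : 'I_N) : (G + G^T) i j = (i == partner j)%:R.
Proof.
rewrite [(G + G^T) i j]mxE [G^T i j]mxE Gmat_col Gmat_row -(inj_eq val_inj) /=.
case: (ltnP j nu) => j_nu.
  by rewrite (_ : (j == (i + nu)%N :> nat) = false) ?andbF ?add0r //; apply/eqP; lia.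
rewrite andFb addr0 (_ : _ && _ = (i == (j - nu)%N :> nat)) //.
by apply/andP/eqP => [[]|]; lia.
Qed.

Lemma Gmat_diag : G j j = 0.
Proof. by rewrite Gmat_row (_ : (j == (j + nu)%N :> nat) = false) ?andbF //; apply/eqP; lia. Qed.

End GmatHyperbolic.

Section GmatForms.
Variables (R : finComUnitRingType) (nu delta : nat) (z : R) (j : 'I_(2 * nu + delta)).
Hypothesis j_lt : (j < 2 * nu)%N.
Local Notation G := (Gmat nu delta z).

Lemma bform_Gmat_delta u : bform G u 'e_j = u 0 (partner j).
Proof.
rewrite /bform trmx_delta -colE 2!mxE (bigD1 (partner j)) //= big1 => [|i ne_ij].
  by rewrite Gmat_sym_partner // eqxx mulr1 addr0.
by rewrite Gmat_sym_partner // (negbTE ne_ij) mulr0.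
Qed.

Lemma qform_Gmat_delta : qform G 'e_j = 0.
Proof. by rewrite /qform trmx_delta -rowE -colE 2!mxE Gmat_diag. Qed.

End GmatForms.

Section IsotropicLift.
Variables (R : finComUnitRingType) (N : nat) (G : 'M[R]_N) (k k' : 'I_N).
Hypotheses (k_neq : k != k') (qform_e : qform G 'e_k' = 0)
  (bform_e : forall u, bform G u 'e_k' = u 0 k).
Implicit Types (b c u : 'rV[R]_N) (t : R).

Definition clear_coord b := b - b 0 k' *: 'e_k'.

Definition isotropic_lift c := c + (- qform G c / c 0 k) *: 'e_k'.

Lemma qform_shift u t : qform G (u + t *: 'e_k') = qform G u + t * u 0 k.
Proof. by rewrite qformD qformZ qform_e bformZr bform_e mulr0 addr0. Qed.

Lemma shift_coord u t i : (u + t *: 'e_k') 0 i = if i == k' then u 0 i + t else u 0 i.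
Proof. by rewrite !mxE eqxx; case: eqP; rewrite ?mulr1 ?mulr0 ?addr0. Qed.

Lemma clear_coordE b i : clear_coord b 0 i = if i == k' then 0 else b 0 i.
Proof. by rewrite /clear_coord -scaleNr shift_coord; case: eqP => [->|]; rewrite ?subrr. Qed.

Lemma isotropic_liftE c i : i != k' -> isotropic_lift c 0 i = c 0 i.
Proof. by rewrite shift_coord => /negbTE ->. Qed.

Lemma qform_isotropic_lift c : c 0 k \is a GRing.unit -> qform G (isotropic_lift c) = 0.
Proof. by move=> ck; rewrite qform_shift divrK // addrN. Qed.

Lemma isotropic_lift_clear b :
  qform G b = 0 -> b 0 k \is a GRing.unit -> isotropic_lift (clear_coord b) = b.
Proof.
move=> qb bk; have bk_eq : clear_coord b 0 k = b 0 k by rewrite clear_coordE (negbTE k_neq).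
have : qform G (clear_coord b + b 0 k' *: 'e_k') = 0 by rewrite subrK.
rewrite qform_shift bk_eq => /eqP; rewrite addr_eq0 => /eqP qc.
by rewrite /isotropic_lift qc opprK bk_eq mulrK // subrK.
Qed.

Lemma clear_isotropic_lift c : c 0 k' = 0 -> clear_coord (isotropic_lift c) = c.
Proof. by move=> ck'; rewrite /clear_coord shift_coord eqxx ck' add0r addrK. Qed.

Lemma isotropic_eq_clear b1 b2 : qform G b1 = 0 -> qform G b2 = 0 ->
  b1 0 k \is a GRing.unit -> b2 0 k \is a GRing.unit ->
  clear_coord b1 = clear_coord b2 -> b1 = b2.
Proof.
move=> q1 q2 u1 u2 c12.
by rewrite -(isotropic_lift_clear q1 u1) c12 isotropic_lift_clear.
Qed.

End IsotropicLift.

Lemma piv_clear_coord n N (k' : 'I_N) (b : 'rV['Z_(2 ^ n)]_N) :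
  piv (clear_coord k' b) = clear_coord k' (piv b).
Proof. by rewrite /piv /clear_coord map_mxB map_mxZ map_delta_mx mxE. Qed.

Lemma qform_rshift (R : finComUnitRingType) m d (H : 'M[R]_(m + d)) (c : 'rV[R]_(m + d)) :
  (forall i : 'I_m, c 0 (lshift d i) = 0) ->
  qform H c = \sum_(j < d) (\sum_(i < d) c 0 (rshift m i) * H (rshift m i) (rshift m j))
                           * c 0 (rshift m j).
Proof.
move=> c_l; rewrite /qform mxE big_split_ord /= big1 ?add0r => [|j _]; last first.
  by rewrite !mxE c_l mulr0.
apply: eq_bigr => j _; rewrite !mxE big_split_ord /= big1 ?add0r // => i _.
by rewrite c_l mul0r.
Qed.

Lemma Gmat_Z2_tail_anisotropic nu delta (c : 'rV['Z_2]_(2 * nu + delta)) : (delta <= 2)%N ->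
  (forall i : 'I_(2 * nu), c 0 (lshift delta i) = 0) -> qform (Gmat nu delta 1) c = 0 -> c = 0.
Proof.
move=> delta_le2 c_l /eqP; rewrite qform_rshift // => qc.
apply/rowP => i; rewrite mxE; case: (split_ordP i) => {}i ->; first exact: c_l.
have tailF x : (2 * nu + x < nu)%N = false by lia.
case: delta delta_le2 c c_l qc i => [|[|[|//]]] _ c c_l qc i; first by case: i.
  rewrite !big_ord1 !mxE /= !tailF addn0 eqxx /= mulr1 in qc; rewrite (ord1 i).
  by move: qc; case: (Z2_cases (c 0 (rshift (2 * nu) ord0))) => ->.
rewrite !big_ord_recl !big_ord0 !mxE /= !tailF /bump /= addn0 addn1 !eqxx in qc.
rewrite (gtn_eqF (ltnSn _)) (ltn_eqF (ltnSn _)) /= in qc.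
set x := c 0 (rshift _ ord0) in qc; set y := c 0 (rshift _ (lift ord0 ord0)) in qc.
have [x0 y0] : x = 0 /\ y = 0 by move: qc; case: (Z2_cases x) => ->; case: (Z2_cases y) => ->.
by case: i => -[|[|//]] i_lt; [rewrite -x0 | rewrite -y0]; congr (c 0 _); apply: val_inj.
Qed.

Lemma Gmat_Z2_vertex_coord nu delta (c : 'rV['Z_2]_(2 * nu + delta)) : (delta <= 2)%N ->
  is_vertex (Gmat nu delta 1) c -> exists i : 'I_(2 * nu), c 0 (lshift delta i) = 1.
Proof.
move=> delta_le2 /andP[/existsP[i ci] /eqP qc].
case: (pickP (fun i => c 0 (lshift delta i) == 1)) => [j /eqP|c_l]; first by exists j.
suff c0 : c = 0 by rewrite c0 mxE unitr0 in ci.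
apply: Gmat_Z2_tail_anisotropic => // j.
by have := c_l j; case: (Z2_cases (c 0 (lshift delta j))) => ->.
Qed.

Lemma card_row_family (T : finType) N (F : 'I_N -> pred T) :
  #|[set c : 'rV[T]_N | [forall j, c 0 j \in F j]]| = (\prod_j #|F j|)%N.
Proof.
pose graph (c : 'rV[T]_N) : {ffun 'I_N -> T} := [ffun j => c 0 j].
have graph_inj : injective graph.
  by move=> c d /ffunP eq_cd; apply/rowP => j; have := eq_cd j; rewrite !ffunE.
have -> : (\prod_j #|F j|)%N = #|family F| by rewrite card_family foldrE big_map big_enum.
rewrite -(card_imset _ graph_inj).
apply: eq_card => f; apply/imsetP/familyP => [[c] /[!inE] /forallP cF -> j|fF].
  by rewrite ffunE.
exists (\row_j f j); first by rewrite inE; apply/forallP => j; rewrite mxE.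
by apply/ffunP => j; rewrite !ffunE mxE.
Qed.

Section CountingZ2n.
Variable n : nat.
Hypothesis n_gt0 : (0 < n)%N.

Lemma card_pi2_fibre (e : 'Z_2) : #|[set x : 'Z_(2 ^ n) | pi2 x == e]| = (2 ^ (n - 1))%N.
Proof.
have card_Z : (Zp_trunc (2 ^ n)).+2 = (2 ^ (n - 1) + 2 ^ (n - 1))%N.
  by case: n n_gt0 => // m _; rewrite Zp_trunc_exp2S subSS subn0 expnS addnn mul2n.
set A := [set x : 'Z_(2 ^ n) | pi2 x == 0]; set B := [set x : 'Z_(2 ^ n) | pi2 x == 1].
have BE : B = [set x + 1 | x in A].
  apply/setP => x; rewrite inE; apply/eqP/imsetP => [pi2x|[y /[!inE] /eqP pi2y ->]].
    by exists (x - 1); rewrite ?subrK // inE rmorphB /= pi2x rmorph1 subrr.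
  by rewrite rmorphD /= pi2y rmorph1 add0r.
have cardB : #|B| = #|A| by rewrite BE card_imset //; apply: addIr.
have cardA : #|A| = (2 ^ (n - 1))%N.
  suff : (#|A| + #|A| = 2 ^ (n - 1) + 2 ^ (n - 1))%N by lia.
  have AC : ~: A = B by apply/setP => x; rewrite !inE; case: (Z2_cases (pi2 x)) => ->.
  by rewrite -{2}cardB -AC cardsC card_ord card_Z.
by case: (Z2_cases e) => ->; rewrite -/B ?cardB cardA.
Qed.

Lemma card_units_Z2n : #|[set x : 'Z_(2 ^ n) | x \is a GRing.unit]| = (2 ^ (n - 1))%N.
Proof. by rewrite -(card_pi2_fibre 1); apply: eq_card => x; rewrite !inE unitZ2nE. Qed.

End CountingZ2n.

Section GmatVertexFibre.
Variables (n nu delta : nat) (z : 'Z_(2 ^ n)).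
Hypotheses (n_gt0 : (0 < n)%N) (delta_le2 : (delta <= 2)%N) (z_unit : z \is a GRing.unit).
Local Notation N := (2 * nu + delta)%N.
Local Notation G := (Gmat nu delta z).
Implicit Types a b c : 'rV['Z_(2 ^ n)]_N.

Lemma map_pi2_Gmat : map_mx (@pi2 n) G = Gmat nu delta 1.
Proof.
have pi2z : pi2 z = 1 by apply/eqP; rewrite -unitZ2nE.
by apply/matrixP => i j; rewrite !mxE; repeat case: ifP => _; rewrite ?rmorph0 ?rmorph1.
Qed.

Section Lift.
Variables (a : 'rV['Z_(2 ^ n)]_N) (k' : 'I_N).
Hypotheses (a_vertex : is_vertex G a) (k'_lt : (k' < 2 * nu)%N).
Local Notation k := (partner k').
Hypothesis a_k : pi2 (a 0 k) = 1.
Local Notation lift := (isotropic_lift G k k').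

Let k_neq : k != k' := partner_neq k'_lt.
Let qform_e R z0 := qform_Gmat_delta (R := R) z0 k'_lt.
Let bform_e R z0 := bform_Gmat_delta (R := R) z0 k'_lt.

Let F j : pred 'Z_(2 ^ n) := if j == k' then pred1 0 else [pred x | pi2 x == pi2 (a 0 j)].
Let T := [set c : 'rV_N | [forall j, c 0 j \in F j]].

Lemma card_T : #|T| = ((2 ^ (n - 1)) ^ (N - 1))%N.
Proof.
rewrite card_row_family (bigD1 k') //= {1}/F eqxx card1 mul1n.
rewrite (eq_bigr (fun _ => 2 ^ (n - 1))%N) => [|j /negbTE j_neq]; last first.
  by rewrite /F j_neq -(card_pi2_fibre n_gt0 (pi2 (a 0 j))); apply: eq_card => x; rewrite inE.
by rewrite prod_nat_const cardC1 card_ord [(N - 1)%N]subn1.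
Qed.

Lemma mem_T c : (c \in T) = (c 0 k' == 0) && (piv c == piv (clear_coord k' a)).
Proof.
rewrite inE; apply/forallP/andP => [cF|[/eqP ck' /piv_eqP pc] j].
  split; first by have := cF k'; rewrite /F eqxx.
  apply/piv_eqP => j; rewrite clear_coordE; have := cF j; rewrite /F.
  by case: eqP => [->|_] /eqP ->; rewrite ?rmorph0.
by rewrite /F; case: eqP => [->|/eqP ne]; rewrite inE ?ck' //= pc clear_coordE (negbTE ne).
Qed.

Lemma lift_in_fibre c : c \in T -> lift c \in vertex_fibre G a.
Proof.
rewrite mem_T => /andP[/eqP ck' /eqP pc].
have ck : pi2 (c 0 k) = 1.
  by move/eqP/piv_eqP: pc => /(_ k); rewrite clear_coordE (negbTE k_neq) a_k.
have lift_k : lift c 0 k = c 0 k by apply: isotropic_liftE.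
have lift_vertex : is_vertex G (lift c).
  rewrite /is_vertex qform_isotropic_lift ?qform_e ?bform_e ?unitZ2nE ?ck // eqxx andbT.
  by apply/existsP; exists k; rewrite lift_k unitZ2nE ?ck.
rewrite inE lift_vertex /=; apply/eqP.
have /andP[_ /eqP] := is_vertex_piv n_gt0 lift_vertex.
have /andP[_ /eqP] := is_vertex_piv n_gt0 a_vertex.
rewrite map_pi2_Gmat => qa qlift.
(* The k'-coordinate mod 2 is forced by the same argument over Z_2. *)
apply: (isotropic_eq_clear k_neq (qform_e (1 : 'Z_2)) (bform_e (1 : 'Z_2)) qlift qa).
- by rewrite mxE lift_k unitZ2E ck.
- by rewrite mxE unitZ2E a_k.
- by rewrite -!piv_clear_coord clear_isotropic_lift.
Qed.

Lemma clear_in_T b : b \in vertex_fibre G a -> clear_coord k' b \in T.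
Proof.
rewrite inE mem_T clear_coordE eqxx /= => /andP[_ /eqP pba].
by rewrite !piv_clear_coord pba.
Qed.

Lemma card_vertex_fibre_at : #|vertex_fibre G a| = ((2 ^ (n - 1)) ^ (N - 1))%N.
Proof.
have -> : vertex_fibre G a = lift @: T.
  apply/setP => b; apply/idP/imsetP => [Sb|[c /lift_in_fibre Sc ->] //].
  exists (clear_coord k' b); first exact: clear_in_T.
  move: Sb; rewrite inE => /andP[/andP[_ /eqP qb] /piv_eqP/(_ k)].
  by rewrite a_k => bk; rewrite isotropic_lift_clear ?qform_e ?bform_e ?unitZ2nE ?bk.
rewrite card_in_imset ?card_T // => c1 c2.
rewrite !mem_T => /andP[/eqP c1k' _] /andP[/eqP c2k' _] eq12.
by rewrite -(clear_isotropic_lift G k c1k') eq12 clear_isotropic_lift.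
Qed.

End Lift.

Lemma card_vertex_fibre a : is_vertex G a -> #|vertex_fibre G a| = ((2 ^ (n - 1)) ^ (N - 1))%N.
Proof.
move=> a_vertex; have := is_vertex_piv n_gt0 a_vertex; rewrite map_pi2_Gmat.
case/(Gmat_Z2_vertex_coord delta_le2) => i; rewrite mxE => a_i.
have i_lt : (lshift delta i < 2 * nu)%N by rewrite /= ltn_ord.
by apply: (card_vertex_fibre_at a_vertex (partner_lt i_lt)); rewrite partnerK.
Qed.

Lemma card_vertex_classes_piv a : (0 < nu)%N -> is_vertex G a ->
  #|[set C in vertices G | [exists b, (C == cls b) && (cls (piv b) == cls (piv a))]]|
  = (2 ^ ((n - 1) * (N - 2)))%N.
Proof.
move=> nu_gt0 a_vertex; rewrite vertex_classes_piv.
have fibre_prim : {in vertex_fibre G a, forall b, primitive b}.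
  by move=> b; rewrite inE => /andP[/andP[]].
have fibre_scale : {in vertex_fibre G a, forall b l, l \is a GRing.unit -> l *: b \in vertex_fibre G a}.
  by move=> b /[!inE] /andP[vb pba] l ul; rewrite inE pivZ // pba (is_vertexZ ul vb).
have := card_cls_partition fibre_prim fibre_scale.
rewrite card_vertex_fibre // card_units_Z2n // expnM (_ : N - 1 = (N - 2).+1)%N; last by lia.
by rewrite expnSr => /eqP; rewrite eqn_pmul2r ?expn_gt0 // => /eqP.
Qed.

End GmatVertexFibre.

Theorem lemma2p2 (n nu delta : nat) (z : 'Z_(2 ^ n)) :
  (1 <= n)%N -> (1 <= nu)%N -> (delta <= 2)%N -> z \is a GRing.unit ->
  let G := Gmat nu delta z in
  let G2 := map_mx (@pi2 n) G in
  (* (1) *)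
  (forall a : 'rV['Z_(2 ^ n)]_(2 * nu + delta),
     is_vertex G a ->
     #|[set C in vertices G |
          [exists b, (C == cls b) && (cls (piv b) == cls (piv a))]]|
       = (2 ^ ((n - 1) * (2 * nu + delta - 2)))%N) /\
  (* (2) *)
  (forall a b : 'rV['Z_(2 ^ n)]_(2 * nu + delta),
     is_vertex G a -> is_vertex G b ->
     (adj_vertices G a b <-> adj_vertices G2 (piv a) (piv b))) /\
  (* (3) *)
  (forall a b : 'rV['Z_(2 ^ n)]_(2 * nu + delta),
     adj_vertices G2 (piv a) (piv b) ->
     forall m1 m2 : 'rV['Z_(2 ^ n)]_(2 * nu + delta),
       (exists c, m1 = 2%:R *: c) -> (exists c, m2 = 2%:R *: c) ->
       qform G (a + m1) = 0 -> qform G (b + m2) = 0 ->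
       adj_vertices G (a + m1) (b + m2)).
Proof.
move=> n_gt0 nu_gt0 delta_le2 z_unit G G2; split; [|split].
- by move=> a; apply: card_vertex_classes_piv.
- by move=> a b va vb; rewrite adj_vertices_piv.
- by move=> a b adj2 _ _ [c1 ->] [c2 ->]; apply: adj_vertices_add2Z.
Qed.
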